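(* Let $n\ge 2$, $T\ge\log n$, $\nu\le 1$, and $\eta=\sqrt{\log(n)/T}$. Consider the following process (Hedge with noisy losses). Set $w^{(1)}_i=1$ for all $i\in[n]$. For $t=1,\dots,T$: output the distribution $p^{(t)}$ on $[n]$ with $p^{(t)}_i=w^{(t)}_i/\sum_j w^{(t)}_j$; then a random loss vector $\hat m^{(t)}\in\mathbb R^n$ is revealed; set $w^{(t+1)}_i=w^{(t)}_i\exp(-\eta\hat m^{(t)}_i)$. Let $m^{(t)}=\mathbb E[\hat m^{(t)}\mid \hat m^{(1)},\dots,\hat m^{(t-1)}]$, and suppose that for every $t$: $m^{(t)}\in[-1,1]^n$, and conditioned on $\hat m^{(1)},\dots,\hat m^{(t-1)}$, each coordinate of $\hat m^{(t)}-m^{(t)}$ is sub-Gaussian with variance proxy $\nu^2$ (i.e. $\mathbb E[\exp(s(\hat m^{(t)}_i-m^{(t)}_i))\mid\text{past}]\le\exp(s^2\nu^2/2)$ for all real $s$). Then for every $i\in[n]$, $$\mathbb E\Big[\sum_{t=1}^T\langle m^{(t)},p^{(t)}\rangle\Big]\le \mathbb E\Big[\sum_{t=1}^T m^{(t)}_i\Big]+4\sqrt{T\log n}.$$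
   Context: $\log$ is the natural logarithm and $[n]=\{1,\dots,n\}$. *)

From HB Require Import structures.
From mathcomp Require Import all_boot all_order all_algebra.
From mathcomp Require Import all_classical all_reals all_analysis.
Set Implicit Arguments. Unset Strict Implicit. Unset Printing Implicit Defensive.
Import Order.TTheory GRing.Theory Num.Theory.
Local Open Scope classical_set_scope.
Local Open Scope ring_scope.

Section Hedge.
Context (R : realType) (T : Type) (n : nat).

(* Hedge weights: w^(1)_i = 1 (index 0 here), w^(t+1)_i = w^(t)_i exp(-eta mhat^(t)_i).
   Time is 0-indexed: round t in {0,..,T-1} corresponds to round t+1 of the paper. *)
Fixpoint hedge_w (eta : R) (mhat : nat -> 'I_n -> T -> R) (t : nat)
    (i : 'I_n) (x : T) : R :=
  match t with
  | 0 => 1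
  | t'.+1 => hedge_w eta mhat t' i x * expR (- (eta * mhat t' i x))
  end.

Definition hedge_p (eta : R) (mhat : nat -> 'I_n -> T -> R) (t : nat)
    (i : 'I_n) (x : T) : R :=
  hedge_w eta mhat t i x / \sum_(j < n) hedge_w eta mhat t j x.

End Hedge.

Definition past_sigma (R : realType) (d : measure_display) (T : measurableType d)
    (n : nat) (mhat : nat -> 'I_n -> T -> R) (t : nat) : set (set T) :=
  <<s [set A | exists (s : nat) (j : 'I_n) (B : set R),
           (s < t)%N /\ measurable B /\ A = mhat s j @^-1` B] >>.

(** Hedge is analysed through the potential
    [Z_t = (sum_j w^(t)_j) * exp (eta L_t - t c)], where [L_t] is the cumulative expected
    loss of the algorithm and [c = 2 eta^2 + eta^2 nu^2 / 2].  Given the past, the weights are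
    known, each noisy factor [exp (- eta (mhat_j - m_j))] has conditional mean at most
    [exp (eta^2 nu^2 / 2)], and [exp (- eta m_j) <= 1 - eta m_j + 2 eta^2] for [eta <= 1/2];
    hence [E Z_(t+1) <= E Z_t <= n].  Since [Z_T exp (T c)] dominates the single term
    [exp (eta (L_T - sum_t mhat_i))], Jensen's inequality for [exp] gives
    [eta E (L_T - sum_t m_i) <= T c + ln n], the noisy and the true losses having the same mean.
    With [eta = sqrt (ln n / T)] the right-hand side is at most [4 sqrt (T ln n)]; when
    [eta > 1/2] the trivial bound [2 T] is already good enough. *)

From HB Require Import structures.
From mathcomp Require Import all_boot all_order all_algebra.
From mathcomp Require Import all_classical all_reals all_analysis.
From mathcomp Require Import finmap measurable_realfun ring lra.
Set Implicit Arguments. Unset Strict Implicit. Unset Printing Implicit Defensive.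
Import Order.TTheory GRing.Theory Num.Theory.
Local Open Scope classical_set_scope.
Local Open Scope ring_scope.

Section conditional_bound.
Context (R : realType) d (Om : measurableType d) (P : {measure set Om -> \bar R}).
Context (G : set (set Om)) (G_measurable : G `<=` measurable).
Local Notation Past := (g_sigma_algebraType G).

Lemma measurable_sigma_gen A : <<s G>> A -> measurable A.
Proof. by apply: smallest_sub => //; exact: sigma_algebra_measurable. Qed.

Lemma measurable_fun_sigma_gen (h : Om -> R) :
  measurable_fun (setT : set Past) h -> measurable_fun (setT : set Om) h.
Proof.
move=> mh _ B mB; rewrite setTI; apply: measurable_sigma_gen.
by have := mh measurableT B mB; rewrite setTI.
Qed.

Lemma integral_indicM (A : set Om) (f : Om -> R) : measurable A ->
  (\int[P]_x (\1_A x * f x)%:E = \int[P]_(x in A) (f x)%:E)%E.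
Proof.
move=> mA; rewrite [RHS]integral_mkcond; apply: eq_integral => x _.
by rewrite /patch indicE; case: (x \in A) => /=; rewrite ?mul1r ?mul0r.
Qed.

Lemma integral_indicM_le_cond (f : Om -> R) (k : R) (A : set Om) :
  (forall A, <<s G>> A -> (\int[P]_(x in A) (f x)%:E <= k%:E * P A)%E) -> <<s G>> A ->
  (\int[P]_x (\1_A x * f x)%:E <= k%:E * \int[P]_x (\1_A x)%:E)%E.
Proof.
move=> fle GA; have mA := measurable_sigma_gen GA.
by rewrite integral_indicM // integral_indic // setIT; exact: fle.
Qed.

Import HBNNSimple.

Lemma integral_nnsfunM_le_cond (f : Om -> R) (k : R) (g : {nnsfun Past >-> R}) :
  0 <= k -> (forall x, 0 <= f x) -> measurable_fun setT f ->
  (forall A, <<s G>> A -> (\int[P]_(x in A) (f x)%:E <= k%:E * P A)%E) ->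
  (\int[P]_x (g x * f x)%:E <= k%:E * \int[P]_x (g x)%:E)%E.
Proof.
move=> k0 f0 mf fle.
set s := fset_set (range g).
have GA r : <<s G>> ((g : Past -> R) @^-1` [set r] : set Om).
  by rewrite -[X in <<s G>> X]setTI; exact: (measurable_funP g).
have mA r := measurable_sigma_gen (GA r).
have s_ge0 (i : 'I_#|`s|) : 0 <= s`_i.
  have : s`_i \in s by apply: mem_nth; exact: (ltn_ord i).
  by rewrite in_fset_set // => /set_mem [x _ <-]; exact: fun_ge0.
have gfE x : (g x * f x)%:E =
    (\sum_(i < #|`s|) (s`_i * (\1_(g @^-1` [set s`_i]) x * f x))%:E)%E.
  rewrite (fimfunEord g) mulr_suml sumEFin; congr (_ %:E).
  by apply: eq_bigr => i _; rewrite mulrA.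
have gE x : (g x)%:E = (\sum_(i < #|`s|) (s`_i * \1_(g @^-1` [set s`_i]) x)%:E)%E.
  by rewrite (fimfunEord g) sumEFin.
under eq_integral do rewrite gfE.
under [X in (_ <= _ * X)%E]eq_integral do rewrite gE.
rewrite ge0_integral_sum //; last 2 first.
- move=> i; apply/measurable_EFinP; apply: measurable_funM => //.
  by apply: measurable_funM => //; exact: measurable_indic (mA _).
- by move=> i x _; rewrite lee_fin !mulr_ge0.
rewrite ge0_integral_sum //; last 2 first.
- by move=> i; apply/measurable_EFinP; exact: measurable_funM.
- by move=> i x _; rewrite lee_fin mulr_ge0.
rewrite ge0_sume_distrr; last first.
  by move=> i _; apply: integral_ge0 => x _; rewrite lee_fin mulr_ge0.
apply: lee_sum => i _.
under eq_integral do rewrite EFinM.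
under [X in (_ <= _ * X)%E]eq_integral do rewrite EFinM.
rewrite ge0_integralZl_EFin //; last 2 first.
- by move=> x _; rewrite lee_fin mulr_ge0.
- by apply/measurable_EFinP; apply: measurable_funM => //; exact: measurable_indic (mA _).
rewrite ge0_integralZl_EFin //; last by apply/measurable_EFinP; exact: measurable_indic (mA _).
rewrite muleCA; apply: lee_wpmul2l; first by rewrite lee_fin.
exact: integral_indicM_le_cond.
Qed.

(* The hypothesis on [f] says that its conditional mean given [<<s G>>] is at most [k];
   it is tested against [h] through monotone approximation by simple functions. *)
Lemma integral_mulr_le_cond (f h : Om -> R) (k : R) :
  0 <= k -> (forall x, 0 <= f x) -> measurable_fun setT f ->
  (forall A, <<s G>> A -> (\int[P]_(x in A) (f x)%:E <= k%:E * P A)%E) ->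
  (forall x, 0 <= h x) -> measurable_fun (setT : set Past) h ->
  (\int[P]_x (h x * f x)%:E <= k%:E * \int[P]_x (h x)%:E)%E.
Proof.
move=> k0 f0 mf fle h0 mh.
have mhE : measurable_fun (setT : set Past) (EFin \o h) by exact/measurable_EFinP.
have hE0 (x : Past) : setT x -> (0 <= (EFin \o h) x)%E by rewrite lee_fin.
pose g := nnsfun_approx measurableT mhE.
have g_cvg x : EFin \o (g ^~ x) @ \oo --> (h x)%:E :=
  cvg_nnsfun_approx measurableT mhE hE0 I.
have g_nd := nd_nnsfun_approx measurableT mhE.
have g_nd' a b x : (a <= b)%N -> g a x <= g b x.
  by move=> ab; have /lefP := g_nd a b ab; apply.
have mg j : measurable_fun (setT : set Om) (g j).
  exact: measurable_fun_sigma_gen.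
have -> : (\int[P]_x (h x * f x)%:E = \int[P]_x limn (fun j => (g j x * f x)%:E))%E.
  apply: eq_integral => x _; apply/esym/cvg_lim => //.
  rewrite EFinM; under eq_fun do rewrite EFinM.
  by apply: cvgeZr => //; exact: g_cvg.
rewrite monotone_convergence //; last 3 first.
- by move=> j; apply/measurable_EFinP; exact: measurable_funM.
- by move=> j x _; rewrite lee_fin mulr_ge0.
- by move=> x _ a b ab; rewrite lee_fin ler_wpM2r // g_nd'.
apply: lime_le.
  apply: ereal_nondecreasing_is_cvgn => a b ab; apply: ge0_le_integral => //.
  - by move=> x _; rewrite lee_fin mulr_ge0.
  - by apply/measurable_EFinP; exact: measurable_funM.
  - by apply/measurable_EFinP; exact: measurable_funM.
  - by move=> x _; rewrite lee_fin ler_wpM2r // g_nd'.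
apply: nearW => j.
apply: le_trans (integral_nnsfunM_le_cond (g j) k0 f0 mf fle) _.
apply: lee_wpmul2l; first by rewrite lee_fin.
apply: ge0_le_integral => //.
- by move=> x _; rewrite lee_fin.
- exact/measurable_EFinP.
- by apply/measurable_EFinP; exact: measurable_fun_sigma_gen.
- by move=> x _; rewrite /g nnsfun_approxE le_approx.
Qed.

Lemma integral_sum_mulr_le_cond (I : finType) (f h : I -> Om -> R) (k : R) :
  0 <= k -> (forall j x, 0 <= f j x) -> (forall j, measurable_fun setT (f j)) ->
  (forall j A, <<s G>> A -> (\int[P]_(x in A) (f j x)%:E <= k%:E * P A)%E) ->
  (forall j x, 0 <= h j x) -> (forall j, measurable_fun (setT : set Past) (h j)) ->
  (\int[P]_x (\sum_j h j x * f j x)%:E <= k%:E * \int[P]_x (\sum_j h j x)%:E)%E.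
Proof.
move=> k0 f0 mf fle h0 mh.
have mhO j := measurable_fun_sigma_gen (mh j).
under eq_integral do rewrite -sumEFin.
under [X in (_ <= _ * X)%E]eq_integral do rewrite -sumEFin.
rewrite !ge0_integral_sum //; last 4 first.
- by move=> j; exact/measurable_EFinP.
- by move=> j x _; rewrite lee_fin.
- by move=> j; apply/measurable_EFinP; exact: measurable_funM.
- by move=> j x _; rewrite lee_fin mulr_ge0.
rewrite ge0_sume_distrr; last by move=> j _; apply: integral_ge0 => x _; rewrite lee_fin.
by apply: lee_sum => j _; exact: integral_mulr_le_cond k0 (f0 j) (mf j) (fle j) (h0 j) (mh j).
Qed.

End conditional_bound.

Section real_integrals.
Context (R : realType) d (Om : measurableType d) (mu : {measure set Om -> \bar R}).
Local Notation integrable f := (mu.-integrable setT (EFin \o f)).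

Lemma integral_EFin_Rintegral (f : Om -> R) : integrable f ->
  (\int[mu]_x (f x)%:E = (\int[mu]_x f x)%:E)%E.
Proof. by move=> intf; rewrite /Rintegral fineK // integrable_fin_num. Qed.

Lemma integrableZl_EFin (a : R) (f : Om -> R) : integrable f ->
  integrable (fun x => a * f x).
Proof.
move=> intf; apply: (eq_integrable measurableT (fun x => a%:E * (f x)%:E)%E) => //.
exact: integrableZl.
Qed.

Lemma integrable_lincomb (a b : R) (f g : Om -> R) : integrable f -> integrable g ->
  integrable (fun x => a * f x + b * g x).
Proof.
move=> intf intg.
apply: (eq_integrable measurableT
  ((EFin \o (fun x => a * f x)%R) \+ (EFin \o (fun x => b * g x)%R))%E) => //.
by apply: integrableD => //; exact: integrableZl_EFin.
Qed.

Lemma Rintegral_lincomb (a b : R) (f g : Om -> R) : integrable f -> integrable g ->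
  \int[mu]_x (a * f x + b * g x) = a * \int[mu]_x f x + b * \int[mu]_x g x.
Proof.
move=> intf intg.
by rewrite RintegralD ?RintegralZl // integrableZl_EFin.
Qed.

End real_integrals.

Section probability_integrals.
Context (R : realType) d (Om : measurableType d) (P : probability Om R).
Local Notation integrable f := (P.-integrable setT (EFin \o f)).

Lemma bounded_integrable (f : Om -> R) (B : R) : measurable_fun setT f ->
  (forall x, `|f x| <= B) -> integrable f.
Proof.
move=> mf fB; apply: measurable_bounded_integrable => //.
  by apply: le_lt_trans (probability_le1 P measurableT) _; rewrite ltry.
exists B; split; first by rewrite num_real.
by move=> M BM x _; apply: le_trans (fB x) _; exact: ltW.
Qed.

Lemma Rintegral_cst_probability (c : R) : \int[P]_x c = c.
Proof.
rewrite Rintegral_cst // (_ : fine _ = 1) ?mulr1 //.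
exact: (f_equal fine (probability_setT P)).
Qed.

Lemma Rintegral_le_cst (f : Om -> R) (c : R) : integrable f ->
  (forall x, f x <= c) -> \int[P]_x f x <= c.
Proof.
move=> intf fc; rewrite -[leRHS]Rintegral_cst_probability.
by apply: le_Rintegral => //; exact: finite_measure_integrable_cst.
Qed.

Lemma cst_le_Rintegral (f : Om -> R) (c : R) : integrable f ->
  (forall x, c <= f x) -> c <= \int[P]_x f x.
Proof.
move=> intf cf; rewrite -[leLHS]Rintegral_cst_probability.
by apply: le_Rintegral => //; exact: finite_measure_integrable_cst.
Qed.

(* Jensen's inequality for [exp], from the tangent line [1 + (X - ln c) <= exp (X - ln c)]. *)
Lemma Rintegral_le_ln (X : Om -> R) (c : R) : 0 < c -> integrable X ->
  (\int[P]_x (expR (X x))%:E <= c%:E)%E -> \int[P]_x X x <= ln c.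
Proof.
move=> c_gt0 intX expX_le.
have mX : measurable_fun setT X by apply/measurable_EFinP; case/integrableP: intX.
have int_expX : integrable (fun x => expR (X x)).
  apply/integrableP; split; first exact/measurable_EFinP/measurableT_comp.
  under eq_integral do rewrite /= ger0_norm ?expR_ge0 //.
  by apply: le_lt_trans expX_le _; rewrite ltry.
have expX_le' : \int[P]_x expR (X x) <= c.
  by rewrite -lee_fin -integral_EFin_Rintegral.
have tangent x : 1 * X x + (- c^-1) * expR (X x) <= ln c - 1.
  have := expR_ge1Dx (X x - ln c).
  by rewrite expRD expRN lnK ?posrE //; lra.
have := Rintegral_le_cst (integrable_lincomb 1 (- c^-1) intX int_expX) tangent.
rewrite Rintegral_lincomb // mul1r => h.
have : c^-1 * \int[P]_x expR (X x) <= 1.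
  by rewrite ler_pdivrMl // mulr1.
lra.
Qed.

End probability_integrals.

Section exponential_bounds.
Context (R : realType).

Lemma expR_le_quadratic (y : R) : - (1/2) <= y <= 1/2 -> expR y <= 1 + y + 2 * y ^+ 2.
Proof.
move=> /andP[y_ge y_le].
have expRNy : 1 - y <= expR (- y) by have := expR_ge1Dx (- y).
have y_lt1 : 0 < 1 - y by lra.
have -> : expR y = (expR (- y))^-1 by rewrite expRN invrK.
apply: (le_trans (y := (1 - y)^-1)).
  by rewrite lef_pV2 ?posrE ?expR_gt0.
rewrite -(@ler_pM2l _ (1 - y)) // mulfV ?gt_eqF //.
have : 0 <= y ^+ 2 * (1 - 2 * y) by apply: mulr_ge0; [exact: sqr_ge0 | lra].
nra.
Qed.

Lemma sum_weight_expR_le (I : finType) (w l : I -> R) (eta : R) :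
  0 < eta -> eta <= 1/2 -> (forall j, 0 <= w j) -> (forall j, -1 <= l j <= 1) ->
  0 < \sum_j w j ->
  \sum_j w j * expR (- (eta * l j)) <=
  (\sum_j w j) * expR (- (eta * \sum_j l j * (w j / \sum_k w k)) + 2 * eta ^+ 2).
Proof.
move=> eta_gt0 eta_le w_ge0 l_bound W_gt0.
set W := \sum_k w k.
have sum_le : \sum_j w j * expR (- (eta * l j)) <=
    \sum_j w j * (1 - eta * l j + 2 * eta ^+ 2).
  apply: ler_sum => j _; apply: ler_wpM2l; first exact: w_ge0.
  have /andP[l_ge l_le] := l_bound j.
  have quad : expR (- (eta * l j)) <= 1 + - (eta * l j) + 2 * (- (eta * l j)) ^+ 2.
    by apply: expR_le_quadratic; apply/andP; split; nra.
  have l_sq : l j ^+ 2 <= 1 by nra.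
  have : eta ^+ 2 * l j ^+ 2 <= eta ^+ 2 by have := sqr_ge0 eta; nra.
  by move: quad; rewrite sqrrN exprMn; lra.
apply: le_trans sum_le _.
have W_mean : W * (\sum_j l j * (w j / W)) = \sum_j w j * l j.
  by rewrite mulr_sumr; apply: eq_bigr => j _; field; exact: lt0r_neq0.
have -> : \sum_j w j * (1 - eta * l j + 2 * eta ^+ 2) =
    W + (- eta) * \sum_j w j * l j + (2 * eta ^+ 2) * W.
  by rewrite /W !mulr_sumr -!big_split /=; apply: eq_bigr => j _; ring.
set z := - (eta * \sum_j l j * (w j / W)) + 2 * eta ^+ 2.
have := ler_wpM2l (ltW W_gt0) (expR_ge1Dx z).
suff -> : W * (1 + z) = W + (- eta) * \sum_j w j * l j + (2 * eta ^+ 2) * W by [].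
by rewrite /z -W_mean; ring.
Qed.

End exponential_bounds.

Section hedge.
Context (R : realType) d (Om : measurableType d) (P : probability Om R)
  (n T : nat) (nu eta : R) (mhat m : nat -> 'I_n -> Om -> R).
Hypothesis n_gt0 : (0 < n)%N.
Hypothesis measurable_mhat : forall t i, measurable_fun setT (mhat t i).
Hypothesis m_past : forall t i, (t < T)%N -> forall B : set R, measurable B ->
  past_sigma mhat t (m t i @^-1` B).
Hypothesis m_bound : forall t i x, (t < T)%N -> -1 <= m t i x <= 1.

Local Notation w := (hedge_w eta mhat).
Local Notation p := (hedge_p eta mhat).

Definition hedge_mass t x := \sum_(j < n) w t j x.
Definition hedge_loss t x := \sum_(j < n) m t j x * p t j x.
Definition hedge_cumloss t x := \sum_(s < t) hedge_loss s x.

Lemma hedge_w_gt0 t j x : 0 < w t j x.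
Proof. by elim: t => [|t IH] /=; [exact: ltr01 | rewrite mulr_gt0 // expR_gt0]. Qed.

Lemma hedge_w_le_mass t j x : w t j x <= hedge_mass t x.
Proof.
rewrite /hedge_mass (bigD1 j) //= lerDl.
by apply: sumr_ge0 => k _; exact/ltW/hedge_w_gt0.
Qed.

Lemma hedge_mass_gt0 t x : 0 < hedge_mass t x.
Proof. exact: lt_le_trans (hedge_w_gt0 t (Ordinal n_gt0) x) (hedge_w_le_mass _ _ _). Qed.

Lemma hedge_p_ge0 t j x : 0 <= p t j x.
Proof. by apply: divr_ge0; [exact/ltW/hedge_w_gt0 | exact/ltW/hedge_mass_gt0]. Qed.

Lemma sum_hedge_p t x : \sum_(j < n) p t j x = 1.
Proof. by rewrite /hedge_p -mulr_suml mulfV //; exact: lt0r_neq0 (hedge_mass_gt0 t x). Qed.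

Lemma hedge_loss_bound t x : (t < T)%N -> -1 <= hedge_loss t x <= 1.
Proof.
move=> tT; apply/andP; split.
- rewrite -(sum_hedge_p t x) -sumrN; apply: ler_sum => j _.
  by have /andP[? _] := m_bound j x tT; have := hedge_p_ge0 t j x; nra.
- rewrite -(sum_hedge_p t x); apply: ler_sum => j _.
  by have /andP[_ ?] := m_bound j x tT; have := hedge_p_ge0 t j x; nra.
Qed.

Lemma hedge_wE t j x : w t j x = expR (- (eta * \sum_(s < t) mhat s j x)).
Proof.
elim: t => [|t IH] /=; first by rewrite big_ord0 mulr0 oppr0 expR0.
by rewrite IH big_ord_recr /= -expRD; congr expR; ring.
Qed.

Definition past_gen t : set (set Om) :=
  [set A | exists (s : nat) (j : 'I_n) (B : set R),
     (s < t)%N /\ measurable B /\ A = mhat s j @^-1` B].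

Local Notation past_measurable t f :=
  (measurable_fun (setT : set (g_sigma_algebraType (past_gen t))) f).

Lemma past_gen_measurable t : past_gen t `<=` measurable.
Proof.
move=> _ [s [j [B [_ [mB ->]]]]]; rewrite -[X in measurable X]setTI.
exact: measurable_mhat.
Qed.

Lemma past_sigma_mono s t : (s <= t)%N -> past_sigma mhat s `<=` past_sigma mhat t.
Proof.
move=> st; apply: sub_smallest2r; first exact: smallest_sigma_algebra.
by move=> _ [r [j [B [rs [mB ->]]]]]; exists r, j, B; split => //; exact: leq_trans rs st.
Qed.

Lemma measurable_past t (f : Om -> R) : past_measurable t f -> measurable_fun setT f.
Proof. by move=> mf; exact: (measurable_fun_sigma_gen (@past_gen_measurable t) mf). Qed.

Lemma past_measurable_mhat s t j : (s < t)%N -> past_measurable t (mhat s j).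
Proof. by move=> st _ B mB; rewrite setTI; apply: sub_gen_smallest; exists s, j, B. Qed.

Lemma past_measurable_m s t j : (s <= t)%N -> (s < T)%N -> past_measurable t (m s j).
Proof.
move=> st sT _ B mB; rewrite setTI.
by apply: (past_sigma_mono st); apply: m_past.
Qed.

Lemma past_measurable_w s t j : (s <= t)%N -> past_measurable t (w s j).
Proof.
elim: s => [|s IH] st; first exact: measurable_cst.
apply: measurable_funM; first by apply: IH; exact: ltnW.
apply: measurableT_comp => //; apply: measurable_funN; apply: measurable_funM => //.
exact: past_measurable_mhat.
Qed.

Lemma past_measurable_mass s t : (s <= t)%N -> past_measurable t (hedge_mass s).
Proof. by move=> st; apply: measurable_sum => j; exact: past_measurable_w. Qed.

Lemma past_measurable_p s t j : (s <= t)%N -> past_measurable t (p s j).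
Proof.
move=> st.
have -> : p s j = (fun x => w s j x * expR (- ln (hedge_mass s x))).
  by apply/funext => x; rewrite expRN lnK // posrE hedge_mass_gt0.
apply: measurable_funM; first exact: past_measurable_w.
apply: measurableT_comp => //; apply: measurable_funN.
by apply: measurableT_comp => //; exact: past_measurable_mass.
Qed.

Lemma past_measurable_loss s t : (s <= t)%N -> (s < T)%N -> past_measurable t (hedge_loss s).
Proof.
move=> st sT; apply: measurable_sum => j.
by apply: measurable_funM; [exact: past_measurable_m | exact: past_measurable_p].
Qed.

Lemma past_measurable_cumloss s t : (s <= t.+1)%N -> (s <= T)%N ->
  past_measurable t (hedge_cumloss s).
Proof.
move=> st sT; apply: measurable_sum => r; apply: past_measurable_loss.
- by rewrite -ltnS; exact: leq_trans (ltn_ord r) st.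
- exact: leq_trans (ltn_ord r) sT.
Qed.

Definition hedge_drift := 2 * eta ^+ 2 + eta ^+ 2 * nu ^+ 2 / 2.

Definition hedge_potential t x :=
  hedge_mass t x * expR (eta * hedge_cumloss t x - t%:R * hedge_drift).

Lemma hedge_potential0 x : hedge_potential 0 x = n%:R.
Proof.
rewrite /hedge_potential /hedge_cumloss big_ord0 mulr0 mul0r subr0 expR0 mulr1.
by rewrite /hedge_mass (eq_bigr (fun=> 1)) // sumr_const card_ord.
Qed.

Lemma hedge_potential_ge0 t x : 0 <= hedge_potential t x.
Proof. by rewrite mulr_ge0 ?expR_ge0 // ltW // hedge_mass_gt0. Qed.

Lemma past_measurable_potential t : (t <= T)%N -> past_measurable t (hedge_potential t).
Proof.
move=> tT; apply: measurable_funM; first exact: past_measurable_mass.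
apply: measurableT_comp => //; apply: measurable_funB => //.
by apply: measurable_funM => //; exact: past_measurable_cumloss.
Qed.

(* The part of [Z_(t+1)] that is known at time [t]; the rest is the noise factor. *)
Definition hedge_pred t j x := w t j x * expR (- (eta * m t j x)) *
  expR (eta * hedge_cumloss t.+1 x - t.+1%:R * hedge_drift).

Lemma hedge_potential_succE t x : hedge_potential t.+1 x =
  \sum_(j < n) hedge_pred t j x * expR (- eta * (mhat t j x - m t j x)).
Proof.
rewrite /hedge_potential /hedge_mass mulr_suml; apply: eq_bigr => j _.
rewrite /hedge_pred /= -!mulrA; congr (_ * _).
by rewrite -!expRD; congr expR; ring.
Qed.

Hypothesis eta_gt0 : 0 < eta.
Hypothesis eta_le_half : eta <= 1/2.

Lemma hedge_pred_le t x : (t < T)%N ->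
  expR (eta ^+ 2 * nu ^+ 2 / 2) * \sum_(j < n) hedge_pred t j x <= hedge_potential t x.
Proof.
move=> tT.
set F := expR (eta * hedge_cumloss t.+1 x - t.+1%:R * hedge_drift).
have -> : \sum_(j < n) hedge_pred t j x = F * \sum_(j < n) w t j x * expR (- (eta * m t j x)).
  by rewrite mulr_sumr; apply: eq_bigr => j _; rewrite /hedge_pred mulrC.
have step : \sum_(j < n) w t j x * expR (- (eta * m t j x)) <=
    hedge_mass t x * expR (- (eta * hedge_loss t x) + 2 * eta ^+ 2).
  exact: (sum_weight_expR_le eta_gt0 eta_le_half (fun j => ltW (hedge_w_gt0 t j x))
    (fun j => m_bound j x tT) (hedge_mass_gt0 t x)).
apply: le_trans (ler_wpM2l (expR_ge0 _) (ler_wpM2l (expR_ge0 _) step)) _.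
rewrite [leLHS](_ : _ = hedge_potential t x) //.
rewrite mulrA mulrCA; congr (_ * _).
rewrite /F -!expRD /hedge_cumloss big_ord_recr /= -natr1 /hedge_drift.
by congr expR; ring.
Qed.

Hypothesis subgaussian : forall t i, (t < T)%N -> forall s : R, forall A,
  past_sigma mhat t A ->
  (\int[P]_(x in A) (expR (s * (mhat t i x - m t i x)))%:E
     <= (expR (s ^+ 2 * nu ^+ 2 / 2))%:E * P A)%E.

Lemma integral_hedge_potential_succ_le t : (t < T)%N ->
  (\int[P]_x (hedge_potential t.+1 x)%:E <= \int[P]_x (hedge_potential t x)%:E)%E.
Proof.
move=> tT.
pose noise j x := expR (- eta * (mhat t j x - m t j x)).
have measurable_noise j : measurable_fun setT (noise j).
  apply: measurableT_comp => //; apply: measurable_funM => //.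
  apply: measurable_funB => //.
  exact: measurable_past (past_measurable_m j (leqnn t) tT).
have noise_cond j A : past_sigma mhat t A ->
    (\int[P]_(x in A) (noise j x)%:E <= (expR ((- eta) ^+ 2 * nu ^+ 2 / 2))%:E * P A)%E.
  exact: subgaussian.
have pred_ge0 j x : 0 <= hedge_pred t j x.
  by rewrite !mulr_ge0 ?expR_ge0 // ltW // hedge_w_gt0.
have past_measurable_pred j : past_measurable t (hedge_pred t j).
  apply: measurable_funM; first apply: measurable_funM.
  - exact: past_measurable_w.
  - apply: measurableT_comp => //; apply: measurable_funN; apply: measurable_funM => //.
    exact: past_measurable_m.
  - apply: measurableT_comp => //; apply: measurable_funB => //.
    by apply: measurable_funM => //; exact: past_measurable_cumloss.
have measurable_sum_pred : measurable_fun setT (fun x => \sum_(j < n) hedge_pred t j x).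
  by apply: measurable_sum => j; exact: measurable_past (past_measurable_pred j).
under eq_integral do rewrite hedge_potential_succE.
apply: le_trans (integral_sum_mulr_le_cond (@past_gen_measurable t) (expR_ge0 _)
  (fun j x => expR_ge0 _) measurable_noise noise_cond pred_ge0 past_measurable_pred) _.
rewrite -ge0_integralZl_EFin ?expR_ge0 //; last 2 first.
- by move=> x _; rewrite lee_fin sumr_ge0.
- exact/measurable_EFinP.
apply: ge0_le_integral => //.
- by move=> x _; rewrite lee_fin mulr_ge0 ?expR_ge0 ?sumr_ge0.
- by apply/measurable_EFinP; exact: measurable_funM.
- by apply/measurable_EFinP; exact: measurable_past (past_measurable_potential (ltnW tT)).
- by move=> x _; rewrite lee_fin sqrrN; exact: hedge_pred_le.
Qed.

Lemma integral_hedge_potential_le t : (t <= T)%N ->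
  (\int[P]_x (hedge_potential t x)%:E <= n%:R%:E)%E.
Proof.
elim: t => [|t IH] tT.
  under eq_integral do rewrite hedge_potential0.
  by rewrite integral_cst //= probability_setT mule1.
exact: le_trans (integral_hedge_potential_succ_le tT) (IH (ltnW tT)).
Qed.

Lemma norm_sum_le (f : nat -> R) :
  (forall t, (t < T)%N -> `|f t| <= 1) -> `|\sum_(t < T) f t| <= T%:R.
Proof.
move=> f_le; apply: le_trans (ler_norm_sum _ _ _) _.
rewrite -[X in _ <= X%:R](card_ord T) -sumr_const; apply: ler_sum => t _.
exact: f_le.
Qed.

Lemma integrable_cumloss : P.-integrable setT (EFin \o hedge_cumloss T).
Proof.
apply: (bounded_integrable P (B := T%:R)).
  exact: measurable_past (past_measurable_cumloss (leqnSn T) (leqnn T)).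
move=> x; apply: (norm_sum_le (f := hedge_loss^~ x)) => t tT.
by rewrite ler_norml hedge_loss_bound.
Qed.

Lemma integrable_sum_m i : P.-integrable setT (EFin \o (fun x => \sum_(t < T) m t i x)).
Proof.
apply: (bounded_integrable P (B := T%:R)).
  apply: measurable_sum => t.
  exact: measurable_past (past_measurable_m i (leqnn t) (ltn_ord t)).
move=> x; apply: (norm_sum_le (f := fun t => m t i x)) => t tT.
by rewrite ler_norml m_bound.
Qed.

Hypothesis integrable_mhat : forall t i, (t < T)%N ->
  P.-integrable setT (EFin \o mhat t i).
Hypothesis conditional_mean : forall t i, (t < T)%N -> forall A, past_sigma mhat t A ->
  (\int[P]_(x in A) (mhat t i x)%:E = \int[P]_(x in A) (m t i x)%:E)%E.

Lemma integrable_sum_mhat i :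
  P.-integrable setT (EFin \o (fun x => \sum_(t < T) mhat t i x)).
Proof.
apply: (eq_integrable measurableT (fun x => \sum_(t < T) (mhat t i x)%:E)%E).
  by move=> x _ /=; rewrite sumEFin.
by apply: (integrable_sum measurableT) => t _; exact: integrable_mhat.
Qed.

Lemma Rintegral_sum_mhat i :
  \int[P]_x (\sum_(t < T) mhat t i x) = \int[P]_x (\sum_(t < T) m t i x).
Proof.
rewrite /Rintegral; congr fine.
under eq_integral do rewrite -sumEFin.
under [RHS]eq_integral do rewrite -sumEFin.
rewrite integral_sum //; last by move=> t; exact: integrable_mhat.
rewrite integral_sum //; last first.
  move=> t; apply: (bounded_integrable P (B := 1)).
    exact: measurable_past (past_measurable_m i (leqnn t) (ltn_ord t)).
  by move=> x; rewrite ler_norml m_bound.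
apply: eq_bigr => t _; apply: conditional_mean => //.
exact: (@measurableT _ (g_sigma_algebraType (past_gen t))).
Qed.

Lemma expR_regret_le i x :
  expR (eta * hedge_cumloss T x + (- eta) * \sum_(t < T) mhat t i x) <=
  expR (T%:R * hedge_drift) * hedge_potential T x.
Proof.
rewrite /hedge_potential mulrCA -expRD [_ + (_ - _)]addrC subrK.
rewrite addrC expRD mulNr -hedge_wE ler_wpM2r ?expR_ge0 //.
exact: hedge_w_le_mass.
Qed.

Lemma hedge_regret_le i :
  (\int[P]_x (hedge_cumloss T x)%:E <=
   \int[P]_x (\sum_(t < T) m t i x)%:E
     + ((T%:R * hedge_drift + ln n%:R) / eta)%:E)%E.
Proof.
pose X x := eta * hedge_cumloss T x + (- eta) * \sum_(t < T) mhat t i x.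
have int_X : P.-integrable setT (EFin \o X).
  exact (integrable_lincomb eta (- eta) integrable_cumloss (integrable_sum_mhat i)).
have c_gt0 : 0 < n%:R * expR (T%:R * hedge_drift) by rewrite mulr_gt0 ?expR_gt0 ?ltr0n.
have expX_le : (\int[P]_x (expR (X x))%:E <= (n%:R * expR (T%:R * hedge_drift))%:E)%E.
  apply: (@le_trans _ _
    (\int[P]_x ((expR (T%:R * hedge_drift))%:E * (hedge_potential T x)%:E))%E).
    apply: ge0_le_integral; first exact: measurableT.
    - by move=> x _; rewrite lee_fin expR_ge0.
    - apply/measurable_EFinP; apply: measurableT_comp => //.
      by apply/measurable_EFinP; case/integrableP: int_X.
    - apply: emeasurable_funM => //; apply/measurable_EFinP.
      exact: measurable_past (past_measurable_potential (leqnn T)).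
    - by move=> x _; rewrite -EFinM lee_fin; exact: expR_regret_le.
  rewrite ge0_integralZl_EFin ?expR_ge0 //; last 2 first.
  - by move=> x _; rewrite lee_fin hedge_potential_ge0.
  - apply/measurable_EFinP.
    exact: measurable_past (past_measurable_potential (leqnn T)).
  rewrite [n%:R * _]mulrC EFinM; apply: lee_wpmul2l; first by rewrite lee_fin expR_ge0.
  exact: integral_hedge_potential_le.
have := Rintegral_le_ln c_gt0 int_X expX_le.
rewrite Rintegral_lincomb ?integrable_cumloss ?integrable_sum_mhat //.
rewrite Rintegral_sum_mhat lnM ?posrE ?ltr0n ?expR_gt0 // expRK => regret.
rewrite (integral_EFin_Rintegral integrable_cumloss).
rewrite (integral_EFin_Rintegral (integrable_sum_m i)) -EFinD lee_fin.
by rewrite -lerBlDl ler_pdivlMr //; lra.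
Qed.

Lemma hedge_regret_le_trivial i :
  (\int[P]_x (hedge_cumloss T x)%:E <=
   \int[P]_x (\sum_(t < T) m t i x)%:E + (2 * T%:R)%:E)%E.
Proof.
rewrite (integral_EFin_Rintegral integrable_cumloss).
rewrite (integral_EFin_Rintegral (integrable_sum_m i)) -EFinD lee_fin.
have cumloss_le : \int[P]_x hedge_cumloss T x <= T%:R.
  apply: Rintegral_le_cst integrable_cumloss _ => x.
  have := norm_sum_le (f := fun t => hedge_loss t x).
  by rewrite ler_norml => /(_ _)/andP[] // t tT; rewrite ler_norml hedge_loss_bound.
have sum_m_ge : - T%:R <= \int[P]_x (\sum_(t < T) m t i x).
  apply: cst_le_Rintegral (integrable_sum_m i) _ => x.
  have := norm_sum_le (f := fun t => m t i x).
  by rewrite ler_norml => /(_ _)/andP[] // t tT; rewrite ler_norml m_bound.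
lra.
Qed.

End hedge.

Section rate.
Context (R : realType).

Lemma hedge_rate_le (l T nu : R) : 0 < l -> 0 < T -> 0 <= nu -> nu <= 1 ->
  (T * hedge_drift nu (Num.sqrt (l / T)) + l) / Num.sqrt (l / T) <= 4 * Num.sqrt (T * l).
Proof.
move=> l_gt0 T_gt0 nu_ge0 nu_le1.
set eta := Num.sqrt (l / T); set q := Num.sqrt (T * l).
have eta_gt0 : 0 < eta by rewrite sqrtr_gt0 divr_gt0.
have T_eta2 : T * eta ^+ 2 = l.
  by rewrite sqr_sqrtr ?divr_ge0 ?ltW // mulrC divfK // gt_eqF.
have eta_q : eta * q = l.
  rewrite -sqrtrM ?divr_ge0 ?ltW // (_ : l / T * (T * l) = l ^+ 2).
    by rewrite sqrtr_sqr ger0_norm // ltW.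
  by field; exact: lt0r_neq0.
have nu2_le1 : nu ^+ 2 <= 1 by rewrite expr_le1.
have := ler_piMr (ltW l_gt0) nu2_le1.
rewrite ler_pdivrMr // -mulrA (mulrC q) eta_q /hedge_drift.
have -> : T * (2 * eta ^+ 2 + eta ^+ 2 * nu ^+ 2 / 2) = T * eta ^+ 2 * (2 + nu ^+ 2 / 2).
  by ring.
by rewrite T_eta2; lra.
Qed.

Lemma hedge_rate_le_trivial (l T : R) : 0 < l -> 0 < T -> 1/2 < Num.sqrt (l / T) ->
  2 * T <= 4 * Num.sqrt (T * l).
Proof.
move=> l_gt0 T_gt0 eta_gt.
have eta2 : Num.sqrt (l / T) ^+ 2 = l / T by rewrite sqr_sqrtr // divr_ge0 // ltW.
have : 1/4 < l / T by rewrite -eta2; have := sqrtr_ge0 (l / T); nra.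
rewrite ltr_pdivlMr // => T_lt.
set q := Num.sqrt (T * l).
have q2 : q ^+ 2 = T * l by rewrite sqr_sqrtr // mulr_ge0 // ltW.
have : T ^+ 2 < 4 * q ^+ 2 by rewrite q2; nra.
have := sqrtr_ge0 (T * l); rewrite -/q; nra.
Qed.

End rate.

Theorem mainTheorem3 (R : realType) (d : measure_display) (Omega : measurableType d)
    (P : probability Omega R) (n T : nat) (nu : R)
    (mhat m : nat -> 'I_n -> Omega -> R) :
  (2 <= n)%N ->
  ln (n%:R : R) <= T%:R ->
  0 <= nu -> nu <= 1 ->
  (forall t i, measurable_fun setT (mhat t i)) ->
  (forall t i, (t < T)%N -> P.-integrable setT (EFin \o mhat t i)) ->
  (forall t i, (t < T)%N -> forall B : set R, measurable B ->
      past_sigma mhat t (m t i @^-1` B)) ->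
  (forall t i, (t < T)%N -> forall A, past_sigma mhat t A ->
      (\int[P]_(x in A) (mhat t i x)%:E = \int[P]_(x in A) (m t i x)%:E)%E) ->
  (forall t i x, (t < T)%N -> -1 <= m t i x <= 1) ->
  (forall t i, (t < T)%N -> forall s : R, forall A, past_sigma mhat t A ->
      (\int[P]_(x in A) (expR (s * (mhat t i x - m t i x)))%:E
         <= (expR (s ^+ 2 * nu ^+ 2 / 2))%:E * P A)%E) ->
  forall i : 'I_n,
    let eta := Num.sqrt (ln n%:R / T%:R) in
    (\int[P]_x (\sum_(t < T) \sum_(j < n) m t j x * hedge_p eta mhat t j x)%:E
      <= \int[P]_x (\sum_(t < T) m t i x)%:E
         + (4 * Num.sqrt (T%:R * ln n%:R))%:E)%E.
Proof.
move=> n_ge2 ln_le_T nu_ge0 nu_le1 measurable_mhat integrable_mhat m_past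
  conditional_mean m_bound subgaussian i; cbv zeta.
set eta := Num.sqrt (ln n%:R / T%:R).
have n_gt0 : (0 < n)%N by exact: leq_trans n_ge2.
have ln_gt0 : 0 < ln (n%:R : R) by rewrite ln_gt0 // ltr1n.
have T_gt0 : 0 < (T%:R : R) := lt_le_trans ln_gt0 ln_le_T.
have [eta_le_half | eta_gt_half] := leP eta (1/2).
- have eta_gt0 : 0 < eta by rewrite sqrtr_gt0 divr_gt0.
  apply: le_trans (hedge_regret_le n_gt0 measurable_mhat m_past m_bound eta_gt0
    eta_le_half subgaussian integrable_mhat conditional_mean i) _.
  by apply: leeD2l; rewrite lee_fin; exact: hedge_rate_le.
- apply: le_trans (hedge_regret_le_trivial P eta n_gt0 measurable_mhat m_past m_bound i) _.
  by apply: leeD2l; rewrite lee_fin; exact: hedge_rate_le_trivial eta_gt_half.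
Qed.
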